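(* Let $\Pi$ be a projective plane of order $q^2$ and let $\pi$ be a Baer subplane of $\Pi$. Then for any embedding $\phi$ of the complete bipartite graph $K_{q^2,q^2}$ into $\Pi$, the set of image points $\phi(V(K_{q^2,q^2}))$ contains at most (a) $q^2$ points of $\pi$, if $q>2$; (b) $q^2+1$ points of $\pi$, if $q=2$.
   Context: A finite projective plane of order $Q$ has $Q^2+Q+1$ points and lines, $Q+1$ points on each line and $Q+1$ lines through each point; any two distinct points lie on a unique line and any two lines meet in a unique point. A subplane of $\Pi$ is a set of points and lines of $\Pi$ forming a projective plane under the inherited incidence; a Baer subplane of a plane of order $q^2$ is a subplane of order $q$. An embedding of a simple graph $G=(V,E)$ into $\Pi$ is an injective map $\phi$ from $V$ to the points of $\Pi$ such that the induced map sending an edge $ab$ to the line through $\phi(a),\phi(b)$ is injective on $E$. *)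

From mathcomp Require Import all_boot.
Set Implicit Arguments.
Unset Strict Implicit.
Unset Printing Implicit Defensive.

Definition proj_plane_on (P L : finType) (inc : P -> L -> bool)
    (Pt : {set P}) (Ln : {set L}) (n : nat) : Prop :=
  [/\ #|Pt| = n ^ 2 + n + 1 /\ #|Ln| = n ^ 2 + n + 1,
      (forall l, l \in Ln -> #|[set p in Pt | inc p l]| = n + 1),
      (forall p, p \in Pt -> #|[set l in Ln | inc p l]| = n + 1),
      (forall p1 p2, p1 \in Pt -> p2 \in Pt -> p1 != p2 ->
          exists! l, [/\ l \in Ln, inc p1 l & inc p2 l]) &
      (forall l1 l2, l1 \in Ln -> l2 \in Ln -> l1 != l2 ->
          exists! p, [/\ p \in Pt, inc p l1 & inc p l2])].

Definition proj_plane (P L : finType) (inc : P -> L -> bool) (n : nat) : Prop :=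
  proj_plane_on inc [set: P] [set: L] n.

Definition subplane (P L : finType) (inc : P -> L -> bool)
    (S : {set P}) (M : {set L}) (n : nat) : Prop :=
  proj_plane_on inc S M n.

Definition baer_subplane (P L : finType) (inc : P -> L -> bool)
    (S : {set P}) (M : {set L}) (q : nat) : Prop :=
  subplane inc S M q.

(* The line through two points (the unique one when the points are distinct). *)
Definition line_through (P L : finType) (inc : P -> L -> bool) (p1 p2 : P)
  : option L := [pick l | inc p1 l && inc p2 l].

(* Embedding of a simple graph (V, adj) into the plane: injective on vertices,
   and the induced map edge ab |-> line through phi a, phi b is injective on
   edges (edges are unordered pairs {a,b}). *)
Definition graph_embedding (V P L : finType) (adj : rel V)
    (inc : P -> L -> bool) (phi : V -> P) : Prop :=
  injective phi /\
  (forall a b c d, adj a b -> adj c d ->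
     line_through inc (phi a) (phi b) = line_through inc (phi c) (phi d) ->
     [set a; b] = [set c; d]).

Definition Kmm_vertex (m : nat) : finType := ('I_m + 'I_m)%type.
Definition Kmm_adj (m : nat) : rel (Kmm_vertex m) :=
  fun x y => match x, y with
             | inl _, inr _ | inr _, inl _ => true
             | _, _ => false
             end.
Arguments Kmm_adj m x y : clear implicits.

(* Let X and Y be the sets of vertices on the two sides of K_{q^2,q^2} whose
   images lie in the Baer subplane pi.  The lines joining phi(X) to phi(Y) are
   pairwise distinct lines of pi, so |X| |Y| <= q^2 + q + 1; and if X is
   nonempty, the lines from one point of phi(X) to phi(Y) are distinct lines of
   pi through that point, so |Y| <= q + 1 (symmetrically for X).  Hence either
   one side misses pi, leaving at most q^2 points, or |X| + |Y| <= 2q + 2,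
   which is at most q^2 for q > 2 and at most 5 for q = 2 because 3 * 3 > 7. *)

From mathcomp Require Import all_boot.
From mathcomp Require Import zify.

Set Implicit Arguments.
Unset Strict Implicit.
Unset Printing Implicit Defensive.

Lemma leq_card_Some_inj (T L : finType) (A : {set T}) (B : {set L})
    (f : T -> option L) :
  {in A &, injective f} -> (forall a, a \in A -> exists2 l, l \in B & f a = Some l) ->
  #|A| <= #|B|.
Proof.
move=> fI fAB; rewrite -(card_in_imset fI) -(card_imset B (@Some_inj _)).
apply/subset_leq_card/subsetP => _ /imsetP [a aA ->].
by have [l lB ->] := fAB a aA; exact: imset_f.
Qed.

Section Subplane.

Variables (P L : finType) (inc : P -> L -> bool) (n k : nat).
Variables (S : {set P}) (M : {set L}).
Hypothesis plane : proj_plane inc n.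
Hypothesis sub : proj_plane_on inc S M k.

Lemma line_throughC (p1 p2 : P) :
  line_through inc p1 p2 = line_through inc p2 p1.
Proof. by apply: eq_pick => l; rewrite andbC. Qed.

Lemma line_through_plane (p1 p2 : P) (l : L) :
  p1 != p2 -> inc p1 l -> inc p2 l -> line_through inc p1 p2 = Some l.
Proof.
have [_ _ _ joinP _] := plane; move=> p12 p1l p2l.
have [l0 [_ l0_uniq]] := joinP p1 p2 (in_setT _) (in_setT _) p12.
rewrite /line_through; case: pickP => [l' /andP [p1l' p2l'] | /(_ l)].
  by rewrite -(l0_uniq l') ?(l0_uniq l) ?inE.
by rewrite p1l p2l.
Qed.

Lemma line_through_subplane (p1 p2 : P) :
  p1 \in S -> p2 \in S -> p1 != p2 ->
  exists2 l, l \in [set l in M | inc p1 l] & line_through inc p1 p2 = Some l.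
Proof.
have [_ _ _ joinP _] := sub; move=> p1S p2S p12.
have [l [[lM p1l p2l] _]] := joinP p1 p2 p1S p2S p12.
by exists l; [rewrite inE lM | exact: line_through_plane].
Qed.

End Subplane.

Section Embedding.

Variables (P L : finType) (inc : P -> L -> bool) (m : nat).
Variable phi : Kmm_vertex m -> P.
Hypothesis emb : graph_embedding (Kmm_adj m) inc phi.

Definition left_in (S : {set P}) := [set i | phi (inl i) \in S].
Definition right_in (S : {set P}) := [set j | phi (inr j) \in S].

Definition edge_line (e : 'I_m * 'I_m) :=
  line_through inc (phi (inl e.1)) (phi (inr e.2)).

Lemma edge_line_inj : injective edge_line.
Proof.
case: emb => _ embI [i1 j1] [i2 j2] E.
have /setP same_edge := embI (inl i1) (inr j1) (inl i2) (inr j2) isT isT E.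
have := same_edge (inl i1); rewrite !inE eqxx => /esym/orP [] /eqP // [->].
by have := same_edge (inr j1); rewrite !inE eqxx orbT => /esym/orP [] /eqP // [->].
Qed.

Lemma edge_end_neq i j : phi (inl i) != phi (inr j).
Proof. by apply/eqP => /(proj1 emb). Qed.

Lemma card_image_in_le (S : {set P}) :
  #|S :&: (phi @: setT)| <= #|left_in S| + #|right_in S|.
Proof.
have sub_img : S :&: (phi @: setT) \subset
    phi @: (inl @: left_in S :|: inr @: right_in S).
  apply/subsetP => p /setIP [pS /imsetP [[i|j] _ def_p]]; subst p;
    apply: imset_f; apply/setUP.
  - by left; apply: imset_f; rewrite inE.
  - by right; apply: imset_f; rewrite inE.
rewrite -(card_imset (left_in S) (@inl_inj _ 'I_m)).
rewrite -(card_imset (right_in S) (@inr_inj 'I_m _)).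
apply: leq_trans (subset_leq_card sub_img) _.
exact: leq_trans (leq_imset_card _ _) (leq_card_setU _ _).
Qed.

Variables (n k : nat) (S : {set P}) (M : {set L}).
Hypothesis plane : proj_plane inc n.
Hypothesis sub : proj_plane_on inc S M k.

Lemma card_right_in_le : 0 < #|left_in S| -> #|right_in S| <= k + 1.
Proof.
case/card_gt0P => i; rewrite inE => iS; have [_ _ deg _ _] := sub.
rewrite -(deg _ iS); apply: (@leq_card_Some_inj _ _ _ _ (fun j => edge_line (i, j))).
  by move=> j1 j2 _ _ /edge_line_inj [].
move=> j; rewrite inE /edge_line /= => jS.
exact: (line_through_subplane plane sub iS jS (edge_end_neq i j)).
Qed.

Lemma card_left_in_le : 0 < #|right_in S| -> #|left_in S| <= k + 1.
Proof.
case/card_gt0P => j; rewrite inE => jS; have [_ _ deg _ _] := sub.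
rewrite -(deg _ jS); apply: (@leq_card_Some_inj _ _ _ _ (fun i => edge_line (i, j))).
  by move=> i1 i2 _ _ /edge_line_inj [].
move=> i; rewrite inE /edge_line /= line_throughC => iS.
by apply: (line_through_subplane plane sub jS iS); rewrite eq_sym edge_end_neq.
Qed.

Lemma card_left_right_in_le :
  #|left_in S| * #|right_in S| <= k ^ 2 + k + 1.
Proof.
have [[_ card_M] _ _ _ _] := sub.
rewrite -cardsX -card_M; apply: (@leq_card_Some_inj _ _ _ _ edge_line).
  by move=> e1 e2 _ _ /edge_line_inj.
move=> [i j]; rewrite !inE /edge_line /= => /andP [iS jS].
have [l] := line_through_subplane plane sub iS jS (edge_end_neq i j).
by rewrite inE => /andP [lM _] ->; exists l.
Qed.

End Embedding.

Lemma side_counts_sum_le (q x y : nat) :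
  x <= q ^ 2 -> y <= q ^ 2 ->
  (0 < x -> y <= q + 1) -> (0 < y -> x <= q + 1) -> x * y <= q ^ 2 + q + 1 ->
  (2 < q -> x + y <= q ^ 2) /\ (q = 2 -> x + y <= q ^ 2 + 1).
Proof.
move=> x_le y_le y_le_q1 x_le_q1 xy_le.
have [-> | x_gt0] := posnP x; first by split=> _; lia.
have [-> | y_gt0] := posnP y; first by split=> _; lia.
have {y_le_q1}y_le := y_le_q1 x_gt0; have {x_le_q1}x_le := x_le_q1 y_gt0.
split=> [q_gt2 | q2]; last by subst q; nia.
suff: 3 * q <= q ^ 2 by lia.
by rewrite expnS expn1 leq_mul2r q_gt2 orbT.
Qed.

Theorem lemma4p9 (P L : finType) (inc : P -> L -> bool) (q : nat)
    (S : {set P}) (M : {set L}) :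
  2 <= q ->
  proj_plane inc (q ^ 2) ->
  baer_subplane inc S M q ->
  forall phi : Kmm_vertex (q ^ 2) -> P,
    graph_embedding (Kmm_adj (q ^ 2)) inc phi ->
    (2 < q -> #|S :&: (phi @: setT)| <= q ^ 2) /\
    (q = 2 -> #|S :&: (phi @: setT)| <= q ^ 2 + 1).
Proof.
move=> _ plane baer phi emb.
have side_le (A : {set 'I_(q ^ 2)}) : #|A| <= q ^ 2.
  by rewrite -[X in _ <= X]card_ord max_card.
have [gt2 eq2] := side_counts_sum_le (side_le _) (side_le _)
  (card_right_in_le emb plane baer) (card_left_in_le emb plane baer)
  (card_left_right_in_le emb plane baer).
have img_le := card_image_in_le phi S.
by split=> [/gt2 | /eq2]; apply: leq_trans.
Qed.
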